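(* Let $\mathcal{H}$ be an infinite-dimensional complex separable Hilbert space, $A\in\mathcal{B}(\mathcal{H})$ such that $\{e^{tA}\}_{t\ge0}$ is exponentially stable, and $\mathcal{G}\subset\mathcal{H}$ countable. If $\{e^{tA}g\}_{g\in\mathcal{G},\,t\in[0,\infty)}$ is a semi-continuous frame for $\mathcal{H}$, then $|\mathcal{G}|=\infty$.
   Context: For $A\in\mathcal{B}(\mathcal{H})$, $e^{tA}:=\sum_{n\ge0}\frac{t^n}{n!}A^n$. The semigroup $\{e^{tA}\}_{t\ge0}$ is exponentially stable if there are constants $M\ge1$ and $\omega<0$ with $\|e^{tA}\|\le Me^{\omega t}$ for all $t\ge0$. For a countable $\mathcal{G}\subset\mathcal{H}$ and an interval $\mathcal{T}\subset[0,\infty)$, $\{e^{tA}g\}_{g\in\mathcal{G},t\in\mathcal{T}}$ is a semi-continuous frame for $\mathcal{H}$ if there are constants $c,C>0$ such that $c\|f\|^2\le\sum_{g\in\mathcal{G}}\int_{\mathcal{T}}|\langle f,e^{tA}g\rangle|^2\,dt\le C\|f\|^2$ for all $f\in\mathcal{H}$. *)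

From HB Require Import structures.
From mathcomp Require Import all_boot all_order all_algebra.
From mathcomp Require Import complex.
From mathcomp Require Import all_classical all_reals all_analysis.
Set Implicit Arguments. Unset Strict Implicit. Unset Printing Implicit Defensive.
Import Order.TTheory GRing.Theory Num.Theory.
Local Open Scope ring_scope.
Local Open Scope classical_set_scope.

Section Hilbert.
Variable R : realType.
Local Notation C := R[i].
Variable V : lmodType C.
Variable ip : V -> V -> C.  (* <x, y>, linear in x, conjugate-linear in y *)

Definition is_inner_product : Prop :=
  [/\ (forall (a : C) (x y z : V), ip (a *: x + y) z = a * ip x z + ip y z),
      (forall x y : V, ip y x = Num.conj (ip x y)),
      (forall x : V, 0 <= ip x x) &
      (forall x : V, ip x x = 0 -> x = 0)].

Definition hnorm (x : V) : R := Num.sqrt (complex.Re (ip x x)).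

Definition cmod (z : C) : R := ComplexField.Normc.normc z.

Definition hcvg (u : nat -> V) (l : V) : Prop :=
  forall e : R, 0 < e -> exists N : nat, forall n, (N <= n)%N -> hnorm (u n - l) < e.

Definition hcauchy (u : nat -> V) : Prop :=
  forall e : R, 0 < e -> exists N : nat,
    forall m n, (N <= m)%N -> (N <= n)%N -> hnorm (u m - u n) < e.

Definition hcomplete : Prop :=
  forall u : nat -> V, hcauchy u -> exists l, hcvg u l.

Definition hseparable : Prop :=
  exists D : set V, countable D /\
    forall (x : V) (e : R), 0 < e -> exists2 d, D d & hnorm (x - d) < e.

Definition infinite_dimensional : Prop :=
  forall n : nat, exists v : 'I_n -> V,
    forall a : 'I_n -> C, \sum_(i < n) a i *: v i = 0 -> forall i, a i = 0.

Definition is_inf_dim_sep_Hilbert : Prop :=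
  [/\ is_inner_product, hcomplete, hseparable & infinite_dimensional].

Definition bounded_operator (A : V -> V) : Prop :=
  (forall (a : C) (x y : V), A (a *: x + y) = a *: A x + A y) /\
  exists M : R, forall x, hnorm (A x) <= M * hnorm x.

(** [S t x] is e^{tA} x := sum_n t^n/n! A^n x (series converging in V) *)
Definition is_exp_semigroup (A : V -> V) (S : R -> V -> V) : Prop :=
  forall (t : R) (x : V),
    hcvg (fun N => \sum_(n < N) (real_complex R (t ^+ n / (n`!)%:R) *: iter n A x)) (S t x).

Definition exp_stable (S : R -> V -> V) : Prop :=
  exists (M omega : R), 1 <= M /\ omega < 0 /\
    forall t : R, 0 <= t -> forall x : V,
      hnorm (S t x) <= M * expR (omega * t) * hnorm x.

Definition semi_continuous_frame (S : R -> V -> V) (G : set V) (T : set R) : Prop :=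
  exists c Cc : R, 0 < c /\ 0 < Cc /\
    forall f : V,
      let s := (\esum_(g in G)
                 \int[@lebesgue_measure R]_(t in T) ((cmod (ip f (S t g))) ^+ 2)%:E)%E in
      ((c * hnorm f ^+ 2)%:E <= s)%E /\ (s <= (Cc * hnorm f ^+ 2)%:E)%E.

End Hilbert.

(* Suppose [G] is finite, with lower frame bound [c > 0], and write
   [e^(om t)] (om < 0) for the stability rate.  For any horizon [T] and
   tolerance [d > 0] we find [f <> 0] orthogonal to the finitely many vectors
   [A^k g] (g in G, k < N): on [0 <= t <= T] only the tail of the exponential
   series of [e^(tA) g] is seen by [f], so [|<f, e^(tA) g>| <= d ||f||],
   while for large [t] stability gives [|<f, e^(tA) g>| <= M e^(om t) ||f|| ||g||].
   Both regimes fit under a single envelope [const * ||f||^2 e^(om t)], whose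
   integral over [0, +oo[ is explicit; choosing [T] and [d] suitably makes the
   total energy [sum_g int |<f, e^(tA) g>|^2] smaller than [c ||f||^2]. *)

From HB Require Import structures.
From mathcomp Require Import all_boot all_order all_algebra.
From mathcomp Require Import complex.
From mathcomp Require Import all_classical all_reals all_analysis.
From mathcomp Require Import ring lra.
Import Order.TTheory GRing.Theory Num.Theory.
Local Open Scope ring_scope.
Local Open Scope classical_set_scope.
Local Notation "x %:C" := (real_complex _ x) (at level 1, format "x %:C").

Section ComplexModulus.
Context {R : realType}.
Local Notation C := R[i].

Lemma cmod_normE (z : C) : (cmod z)%:C = `|z|.
Proof. by case: z. Qed.

Lemma real_complex_inj : injective (real_complex R).
Proof. by move=> a b [->]. Qed.

Lemma cmod_ge0 (z : C) : 0 <= cmod z.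
Proof. by case: z => a b; exact: sqrtr_ge0. Qed.

Lemma cmod0 : cmod (0 : C) = 0.
Proof. by apply: real_complex_inj; rewrite cmod_normE normr0. Qed.

Lemma cmodD (a b : C) : cmod (a + b) <= cmod a + cmod b.
Proof.
have le_real (x y : R) : (x%:C <= y%:C :> C) = (x <= y) by rewrite lecE /= eqxx.
by rewrite -le_real rmorphD /= !cmod_normE; exact: ler_normD.
Qed.

Lemma cmodM (a b : C) : cmod (a * b) = cmod a * cmod b.
Proof. by apply: real_complex_inj; rewrite rmorphM /= !cmod_normE normrM. Qed.

Lemma cmodN (a : C) : cmod (- a) = cmod a.
Proof. by apply: real_complex_inj; rewrite !cmod_normE normrN. Qed.

Lemma cmodJ (a : C) : cmod (Num.conj a) = cmod a.
Proof. by apply: real_complex_inj; rewrite !cmod_normE norm_conjC. Qed.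

Lemma cmod_real (r : R) : cmod r%:C = `|r|.
Proof. by rewrite /cmod /= expr0n addr0 sqrtr_sqr. Qed.

Lemma cmod_sum (I : Type) (s : seq I) (F : I -> C) :
  cmod (\sum_(i <- s) F i) <= \sum_(i <- s) cmod (F i).
Proof.
elim: s => [|a s IH]; first by rewrite !big_nil cmod0.
by rewrite !big_cons (le_trans (cmodD _ _)) // lerD2l.
Qed.
End ComplexModulus.

Section InnerProduct.
Context {R : realType} {V : lmodType R[i]} {ip : V -> V -> R[i]}.
Local Notation C := R[i].
Hypothesis hip : is_inner_product ip.

Lemma ipDZl a x y z : ip (a *: x + y) z = a * ip x z + ip y z.
Proof. by case: hip. Qed.
Lemma ipC x y : ip y x = Num.conj (ip x y).
Proof. by case: hip. Qed.
Lemma ip_ge0 x : 0 <= ip x x.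
Proof. by case: hip. Qed.
Lemma ip_eq0 x : ip x x = 0 -> x = 0.
Proof. by case: hip => _ _ _; apply. Qed.

Lemma ip0l z : ip 0 z = 0.
Proof.
have := ipDZl 1 0 0 z; rewrite scaler0 addr0 mul1r => h.
by apply/esym/(addrI (ip 0 z)); rewrite addr0 -h.
Qed.
Lemma ipZl a x z : ip (a *: x) z = a * ip x z.
Proof. by have := ipDZl a x 0 z; rewrite !addr0 ip0l addr0. Qed.
Lemma ipBl x y z : ip (x - y) z = ip x z - ip y z.
Proof. by rewrite -scaleN1r addrC ipDZl mulN1r addrC. Qed.
Lemma ip0r z : ip z 0 = 0.
Proof. by rewrite ipC ip0l conjC0. Qed.
Lemma ipZr a x z : ip z (a *: x) = Num.conj a * ip z x.
Proof. by rewrite ipC ipZl rmorphM /= -ipC. Qed.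
Lemma ipBr x y z : ip z (x - y) = ip z x - ip z y.
Proof. by rewrite ipC ipBl rmorphB /= -!ipC. Qed.
Lemma ip_suml (I : Type) (r : seq I) (F : I -> V) z :
  ip (\sum_(i <- r) F i) z = \sum_(i <- r) ip (F i) z.
Proof.
elim: r => [|a r IH]; first by rewrite !big_nil ip0l.
by rewrite !big_cons -IH -{1}[F a]scale1r ipDZl mul1r.
Qed.
Lemma ip_sumr (I : Type) (r : seq I) (F : I -> V) z :
  ip z (\sum_(i <- r) F i) = \sum_(i <- r) ip z (F i).
Proof. by rewrite ipC ip_suml rmorph_sum; apply: eq_bigr => i _; apply/esym/ipC. Qed.

Lemma hnorm_ge0 x : 0 <= hnorm ip x.
Proof. exact: sqrtr_ge0. Qed.

Lemma hnorm_sqC x : (hnorm ip x ^+ 2)%:C = ip x x.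
Proof.
have := ip_ge0 x; rewrite /hnorm; case: (ip x x) => a b.
by rewrite lecE /= => /andP[/eqP -> a0]; rewrite sqr_sqrtr.
Qed.

Lemma hnorm_eq0 x : hnorm ip x = 0 -> x = 0.
Proof. by move=> h; apply: ip_eq0; rewrite -hnorm_sqC h expr0n. Qed.

(* Cauchy-Schwarz, first as an inequality of complex numbers: the
   nonnegativity of [<x - a y, x - a y>] for [a = <x,y>/<y,y>]. *)
Lemma cauchy_schwarzC x y : `|ip x y| ^+ 2 <= ip x x * ip y y.
Proof.
have [y0|yn0] := eqVneq (ip y y) 0.
  by rewrite (ip_eq0 y y0) ip0r normr0 expr0n /= ip0l mulr0.
have py : 0 < ip y y by rewrite lt_def yn0 ip_ge0.
have := ip_ge0 (x - (ip x y / ip y y) *: y).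
rewrite ipBl !ipBr !ipZl !ipZr rmorphM /= fmorphV /= -!ipC normCK.
set p := ip y y; set q := ip x y; rewrite [ip y x]ipC -/q.
have -> : ip x x - Num.conj q / p * q
           - (q / p * Num.conj q - q / p * (Num.conj q / p * p))
         = ip x x - q * Num.conj q / p by field; rewrite gt_eqF.
by rewrite subr_ge0 ler_pdivrMr.
Qed.

Lemma cauchy_schwarz x y : cmod (ip x y) <= hnorm ip x * hnorm ip y.
Proof.
rewrite -ler_sqr ?nnegrE ?cmod_ge0 ?mulr_ge0 ?hnorm_ge0 //.
have := cauchy_schwarzC x y.
rewrite -cmod_normE -!hnorm_sqC -rmorphXn -!rmorphM /= lecE /= => /andP[_].
by rewrite exprMn.
Qed.

(* In infinite dimension, every finite family has a nonzero vector
   orthogonal to all its members: the linear map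
   [v |-> (<v, w>)_(w in ws)] restricted to the span of [size ws + 1]
   independent vectors has a nontrivial kernel. *)
Lemma exists_orthogonal (ws : seq V) : infinite_dimensional V ->
  exists2 f, f != 0 & forall w, w \in ws -> ip f w = 0.
Proof.
move=> /(_ (size ws).+1) [v vind].
pose B : 'M[C]_((size ws).+1, size ws) := \matrix_(i, j) ip (v i) (nth 0 ws j).
have kerB : kermx B != 0.
  rewrite -mxrank_eq0 mxrank_ker subn_eq0 -ltnNge ltnS.
  exact: rank_leq_col.
have [i0 ri0] : exists i, row i (kermx B) != 0.
  apply/existsP; rewrite -negb_forall; apply: contra kerB => /forallP h.
  by apply/eqP/row_matrixP => i; rewrite row0; exact/eqP/h.
set u := row i0 (kermx B) in ri0.
have uB : u *m B = 0 by rewrite /u -row_mul mulmx_ker row0.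
exists (\sum_i u ord0 i *: v i).
  apply/eqP => /vind u0; apply/negP: ri0; rewrite negbK.
  by apply/eqP/rowP => j; rewrite u0 mxE.
move=> w ww; rewrite ip_suml.
have jlt : (index w ws < size ws)%N by rewrite index_mem.
have -> : w = nth 0 ws (Ordinal jlt) by rewrite /= (nth_index 0 ww).
have := congr1 (fun M : 'rV[C]_(size ws) => M ord0 (Ordinal jlt)) uB.
rewrite !mxE => uBj; rewrite -[RHS]uBj; apply: eq_bigr => i _.
by rewrite ipZl !mxE.
Qed.

Lemma iter_bound (A : V -> V) : bounded_operator ip A ->
  exists K, forall n x, hnorm ip (iter n A x) <= K ^+ n * hnorm ip x.
Proof.
case=> _ [M hM]; exists (Num.max M 0).
move=> n x; elim: n => [|n IH] /=; first by rewrite expr0 mul1r.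
apply: (le_trans (hM _)); rewrite exprS -mulrA.
apply: (le_trans (y := Num.max M 0 * hnorm ip (iter n A x))).
  by apply: ler_wpM2r; [exact: hnorm_ge0|rewrite le_max lexx].
by apply: ler_wpM2l => //; rewrite le_max lexx orbT.
Qed.
End InnerProduct.

(* Tails of the exponential series are uniformly small: the partial sums of
   [sum_k x^k / k!] form a Cauchy sequence. *)
Lemma exp_series_tail {R : realType} (x e : R) : 0 < e ->
  exists N, forall a b, (N <= a)%N -> \sum_(a <= k < b) x ^+ k / (k`!)%:R < e.
Proof.
move=> e0; have e2 : 0 < e / 2 by rewrite divr_gt0.
have /cvgrPdist_lt /(_ (e / 2) e2) [N _ HN] := @is_cvg_series_exp_coeff R x.
exists N => a b Na.
have [ab|ba] := leqP a b; last by rewrite big_geq ?(ltnW ba).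
set l := limn _ in HN; set s := series (exp_coeff x) in HN *.
have -> : \sum_(a <= k < b) x ^+ k / (k`!)%:R = (l - s a) - (l - s b).
  have -> : (l - s a) - (l - s b) = s b - s a by ring.
  rewrite /s /series /= (@big_cat_nat _ _ _ a 0 b) //= addrC addrK.
  by apply: eq_bigr => k _; rewrite exp_coeffE mulrC.
apply: (le_lt_trans (ler_norm _)); apply: (le_lt_trans (ler_normB _ _)).
by rewrite (splitr e) ltrD //; apply: HN => //; exact: leq_trans Na ab.
Qed.

Section NonnegativeIntegral.
Local Open Scope ereal_scope.
Context d (T : measurableType d) (R : realType).
Variable mu : {measure set T -> \bar R}.

(* Monotonicity of the integral of nonnegative functions, with no
   measurability assumption: it holds at the level of the defining supremum
   over simple functions. *)
Lemma ge0_le_integral_nomeas (D : set T) (f g : T -> \bar R) :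
  (forall x, D x -> 0 <= f x) -> (forall x, D x -> f x <= g x) ->
  \int[mu]_(x in D) f x <= \int[mu]_(x in D) g x.
Proof.
move=> f0 fg.
have g0 x : D x -> 0 <= g x by move=> Dx; exact: le_trans (f0 x Dx) (fg x Dx).
rewrite !ge0_integralE //; apply: ereal_sup_le => _ [h hf <-]; exists h => //= x.
apply: (le_trans (hf x)); rewrite !patchE; case: ifP => // /set_mem Dx.
exact: fg.
Qed.
End NonnegativeIntegral.

(* [int_0^oo B e^(om t) dt = B / (- om)] for [om < 0], computed from the
   normalization of the exponential density of rate [- om]. *)
Lemma integral_exp_decay {R : realType} (om B : R) : om < 0 -> 0 <= B ->
  (\int[@lebesgue_measure R]_(t in `[0%R, +oo[) (B * expR (om * t))%:E
    = (B / - om)%:E)%E.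
Proof.
move=> om0 B0; set r := - om.
have r0 : 0 < r by rewrite oppr_gt0.
transitivity (\int[@lebesgue_measure R]_(t in `[0%R, +oo[)
                 ((B / r)%:E * (exponential_pdf r t)%:E))%E.
  apply: eq_integral => t; rewrite inE /= in_itv /= => /andP[t0 _].
  rewrite exponential_pdfE // -EFinM /r opprK.
  by congr EFin; field; rewrite ?oppr_eq0 lt_eqF.
have pdf0 t : (0 <= (exponential_pdf r t)%:E)%E.
  by rewrite lee_fin exponential_pdf_ge0 // ltW.
rewrite ge0_integralZl_EFin ?divr_ge0 ?(ltW r0) //; last first.
  apply/measurable_realfun.measurable_EFinP; apply: measurable_funTS.
  exact: measurable_exponential_pdf.
rewrite integral_mkcond.
have -> : (fun t => (exponential_pdf r t)%:E) \_ `[0%R, +oo[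
          = (fun t => (exponential_pdf r t)%:E).
  apply/funext => t; rewrite patchE; case: ifPn => // tN.
  rewrite lt0_exponential_pdf // ltNge; apply: contra tN => t0.
  by rewrite inE /= in_itv /= t0.
by rewrite integral_exponential_pdf // mule1.
Qed.

Section OrthogonalWindow.
Context {R : realType} {V : lmodType R[i]} {ip : V -> V -> R[i]}.
Hypothesis hip : is_inner_product ip.
Context {A : V -> V} {S : R -> V -> V} {K : R}.
Hypothesis hS : is_exp_semigroup ip A S.
Hypothesis hK : forall n x, hnorm ip (iter n A x) <= K ^+ n * hnorm ip x.

(* If [f] is orthogonal to [g, A g, ..., A^(N-1) g], only the tail of the
   Taylor polynomial of [e^(tA) g] contributes to [<f, .>]; on [0 <= t <= T]
   that tail is dominated by the tail of the exponential series at [T K]. *)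
Lemma taylor_tail_orth (f g : V) {T t e : R} {N m : nat} :
  0 <= t <= T -> (N <= m)%N ->
  (forall n, (n < N)%N -> ip f (iter n A g) = 0) ->
  (forall a b, (N <= a)%N -> \sum_(a <= k < b) (T * K) ^+ k / (k`!)%:R < e) ->
  cmod (ip f (\sum_(n < m) (t ^+ n / (n`!)%:R)%:C *: iter n A g))
    <= hnorm ip f * hnorm ip g * e.
Proof.
move=> /andP[t0 tT] Nm horth htail.
rewrite (ip_sumr hip); apply: le_trans; first exact: cmod_sum.
pose F n := cmod (ip f ((t ^+ n / (n`!)%:R)%:C *: iter n A g)).
rewrite (_ : \sum_(n < m) _ = \sum_(0 <= n < m) F n); last by rewrite big_mkord.
rewrite (big_cat_nat (leq0n N) Nm) /=.
rewrite big_nat_cond big1 ?add0r; last first.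
  by move=> n /andP[/andP[_ nN] _]; rewrite /F (ipZr hip) horth // mulr0 cmod0.
have fg0 : 0 <= hnorm ip f * hnorm ip g by rewrite mulr_ge0 ?hnorm_ge0.
apply: le_trans (ler_wpM2l fg0 (ltW (htail N m (leqnn N)))).
rewrite mulr_sumr; apply: ler_sum_nat => k _.
rewrite /F (ipZr hip) cmodM cmodJ cmod_real.
have coef : `|t ^+ k / (k`!)%:R| <= T ^+ k / (k`!)%:R.
  rewrite ger0_norm ?divr_ge0 ?exprn_ge0 //.
  by rewrite ler_wpM2r ?invr_ge0 // lerXn2r // nnegrE (le_trans t0).
have term : cmod (ip f (iter k A g)) <= hnorm ip f * (K ^+ k * hnorm ip g).
  exact: le_trans (cauchy_schwarz hip _ _) (ler_wpM2l (hnorm_ge0 _) (hK k g)).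
apply: le_trans (ler_pM (normr_ge0 _) (cmod_ge0 _) coef term) _.
by rewrite exprMn le_eqVlt; apply/orP; left; apply/eqP; ring.
Qed.

(* Hence [|<f, e^(tA) g>| <= ||f|| e (||g|| + 1)] on [0 <= t <= T]:
   the truncation error of the series costs at most [||f|| e]. *)
Lemma orth_semigroup_small (f g : V) {T e : R} {N : nat} : 0 < e ->
  (forall n, (n < N)%N -> ip f (iter n A g) = 0) ->
  (forall a b, (N <= a)%N -> \sum_(a <= k < b) (T * K) ^+ k / (k`!)%:R < e) ->
  forall t, 0 <= t <= T ->
  cmod (ip f (S t g)) <= hnorm ip f * e * (hnorm ip g + 1).
Proof.
move=> e0 horth htail t tT.
have [N' HN'] := hS t g e e0.
set m := maxn N N'.
have Pclose := HN' m (leq_maxr N N'); set P := \sum_(n < m) _ in Pclose.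
have -> : ip f (S t g) = ip f P - ip f (P - S t g).
  by rewrite (ipBr hip) opprB addrC subrK.
apply: le_trans (cmodD _ _) _; rewrite cmodN.
have errB : cmod (ip f (P - S t g)) <= hnorm ip f * e.
  apply: le_trans (cauchy_schwarz hip _ _) _.
  by rewrite ler_wpM2l ?hnorm_ge0 ?ltW.
have tailB := taylor_tail_orth f g tT (leq_maxl N N') horth htail.
apply: le_trans (lerD tailB errB) _.
by rewrite le_eqVlt; apply/orP; left; apply/eqP; ring.
Qed.

Lemma exists_almost_orthogonal (L : seq V) (T d : R) :
  infinite_dimensional V -> 0 < d ->
  exists2 f, f != 0 & forall g, g \in L -> forall t, 0 <= t <= T ->
    cmod (ip f (S t g)) <= hnorm ip f * d.
Proof.
move=> hinf d0.
set Gm1 := \sum_(h <- L) hnorm ip h.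
have Gm1_ge0 : 0 <= Gm1 by rewrite sumr_ge0 // => h _; exact: hnorm_ge0.
set e := d / (Gm1 + 1).
have e0 : 0 < e by rewrite divr_gt0 // ltr_wpDl.
have [N htail] := exp_series_tail (T * K) e e0.
pose ws := [seq iter k A g | g <- L, k <- iota 0 N].
have [f fn0 hf] := exists_orthogonal hip ws hinf.
exists f => // g gL t tT.
have horth n : (n < N)%N -> ip f (iter n A g) = 0.
  by move=> nN; apply: hf; apply: (allpairs_f (fun g k => iter k A g)); rewrite ?mem_iota.
apply: le_trans (orth_semigroup_small f g e0 horth htail t tT) _.
rewrite -mulrA ler_wpM2l ?hnorm_ge0 // /e mulrAC ler_pdivrMr ?ltr_wpDl //.
rewrite (ler_wpM2l (ltW d0)) // lerD2r /Gm1 (big_rem g gL) /= lerDl.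
by rewrite sumr_ge0 // => h _; exact: hnorm_ge0.
Qed.
End OrthogonalWindow.

(* Two regimes glued into one exponential envelope: if [x] is small ([<= F d])
   whenever the decaying factor [E] is still above the threshold [eps], and
   [x <= F Kg E] always, then [x^2] is dominated by a multiple of [E]. *)
Lemma two_regime_envelope {R : realFieldType} (x F d Kg E eps : R) :
  0 <= x -> 0 < eps -> 0 <= E ->
  (eps <= E -> x <= F * d) -> x <= F * Kg * E ->
  x ^+ 2 <= F ^+ 2 * (d ^+ 2 / eps + Kg ^+ 2 * eps) * E.
Proof.
move=> x0 eps0 E0 early late.
set q := d ^+ 2 / eps.
have qE : q * eps = d ^+ 2 by rewrite /q divfK ?gt_eqF.
have q0 : 0 <= q by rewrite /q divr_ge0 ?sqr_ge0 ?ltW.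
have K0 : 0 <= Kg ^+ 2 * eps by rewrite mulr_ge0 ?sqr_ge0 ?ltW.
suff [Y xY YE] : exists2 Y, x ^+ 2 <= F ^+ 2 * Y & Y <= (q + Kg ^+ 2 * eps) * E.
  apply: le_trans xY _; rewrite -mulrA; apply: ler_wpM2l => //; exact: sqr_ge0.
have [epsE|Eeps] := leP eps E.
- exists (q * E); last by rewrite mulrDl lerDl mulr_ge0.
  apply: (le_trans (y := (F * d) ^+ 2)).
    have xFd := early epsE.
    by rewrite ler_sqr ?nnegrE // (le_trans x0).
  by rewrite exprMn -qE; apply: ler_wpM2l => //; [exact: sqr_ge0 | exact: ler_wpM2l].
- exists (Kg ^+ 2 * eps * E); last by rewrite mulrDl lerDr mulr_ge0.
  apply: (le_trans (y := (F * Kg * E) ^+ 2)); first by rewrite ler_sqr ?nnegrE // (le_trans x0).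
  rewrite -mulrA exprMn; apply: ler_wpM2l; first exact: sqr_ge0.
  rewrite exprMn expr2 !mulrA; apply: ler_wpM2r => //.
  by apply: ler_wpM2l; [exact: sqr_ge0 | exact: ltW].
Qed.

Lemma envelope_parameters {R : rcfType} (n : nat) {c r Q : R} :
  0 < c -> 0 < r -> 0 <= Q ->
  exists eps d, [/\ 0 < eps, 0 < d & ((d ^+ 2 / eps) *+ n + Q * eps) / r < c].
Proof.
move=> c0 r0 Q0; set k : R := n%:R.
have n0 : 0 <= k := ler0n R n.
have n1 : 0 < k + 1 by rewrite ltr_wpDl.
have Q1 : 0 < Q + 1 by rewrite ltr_wpDl.
set eps := c * r / (2 * (Q + 1)).
have eps0 : 0 < eps by rewrite !(divr_gt0, mulr_gt0).
have d2_gt0 : 0 < c * r * eps / (2 * (k + 1)) by rewrite !(divr_gt0, mulr_gt0).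
set d := Num.sqrt (c * r * eps / (2 * (k + 1))).
have d2 : d ^+ 2 = c * r * eps / (2 * (k + 1)) by rewrite sqr_sqrtr // ltW.
exists eps, d; split => //; first by rewrite sqrtr_gt0.
rewrite -mulr_natl -/k.
have -> : (k * (d ^+ 2 / eps) + Q * eps) / r = c / 2 * (k / (k + 1) + Q / (Q + 1)).
  by rewrite d2 /eps; field; rewrite ?gt_eqF ?mulr_gt0.
have ltn1 : k / (k + 1) < 1 by rewrite ltr_pdivrMr // mul1r ltrDl.
have ltQ1 : Q / (Q + 1) < 1 by rewrite ltr_pdivrMr // mul1r ltrDl.
apply: (lt_le_trans (y := c / 2 * 2)); last by rewrite divfK ?pnatr_eq0.
by rewrite ltr_pM2l ?divr_gt0 //; lra.
Qed.

(* Energy of one orbit against an [f] that is [d]-almost orthogonal to it on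
   [0 <= t <= T]: with [eps = e^(om T)], the two-regime envelope integrates to
   [||f||^2 (d^2/eps + (M ||g||)^2 eps) / (-om)]. *)
Lemma orbit_energy_bound {R : realType} {V : lmodType R[i]}
    {ip : V -> V -> R[i]} {S : R -> V -> V} (f g : V) {M om T d eps : R} :
  is_inner_product ip -> om < 0 -> expR (om * T) = eps ->
  (forall t, 0 <= t -> forall x, hnorm ip (S t x) <= M * expR (om * t) * hnorm ip x) ->
  (forall t, 0 <= t <= T -> cmod (ip f (S t g)) <= hnorm ip f * d) ->
  (\int[@lebesgue_measure R]_(t in `[0%R, +oo[) ((cmod (ip f (S t g))) ^+ 2)%:E
    <= (hnorm ip f ^+ 2 * (d ^+ 2 / eps + (M * hnorm ip g) ^+ 2 * eps) / - om)%:E)%E.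
Proof.
move=> hip om0 epsE hstab hf.
have eps0 : 0 < eps by rewrite -epsE expR_gt0.
rewrite -integral_exp_decay //; last first.
  have eps_ge0 := ltW eps0.
  apply: mulr_ge0; first exact: sqr_ge0.
  apply: addr_ge0; first exact: divr_ge0 (sqr_ge0 _) eps_ge0.
  exact: mulr_ge0 (sqr_ge0 _) eps_ge0.
apply: ge0_le_integral_nomeas => t; rewrite /= in_itv /= andbT => t0.
  by rewrite lee_fin sqr_ge0.
rewrite lee_fin; apply: two_regime_envelope.
- exact: cmod_ge0.
- exact: eps0.
- exact: expR_ge0.
- by rewrite -epsE ler_expR ler_nM2l // => tT; apply: hf; rewrite t0.
- apply: le_trans (cauchy_schwarz hip _ _) _.
  rewrite -!mulrA; apply: ler_wpM2l; first exact: hnorm_ge0.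
  by rewrite [hnorm ip g * _]mulrC mulrA; exact: hstab.
Qed.

(* Pick [eps] and [d] by [envelope_parameters], let [T] be the
   time at which [e^(om T) = eps], take [f] almost orthogonal to the orbit
   segments on [0, T], and sum the bounds of [orbit_energy_bound]. *)
Lemma finite_orbits_small_energy {R : realType} {V : lmodType R[i]}
    {ip : V -> V -> R[i]} {A : V -> V} {S : R -> V -> V} (L : seq V) {c : R} :
  is_inner_product ip -> infinite_dimensional V -> bounded_operator ip A ->
  is_exp_semigroup ip A S -> exp_stable ip S -> 0 < c ->
  exists2 f, f != 0 &
    (\sum_(g <- L) \int[@lebesgue_measure R]_(t in `[0%R, +oo[)
        ((cmod (ip f (S t g))) ^+ 2)%:E < (c * hnorm ip f ^+ 2)%:E)%E.
Proof.
move=> hip hinf hA hS [M [om [_ [om0 hstab]]]] c0.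
have [K hK] := iter_bound A hA.
set Gm := \sum_(g <- L) hnorm ip g ^+ 2.
have Gm0 : 0 <= M ^+ 2 * Gm.
  by rewrite mulr_ge0 ?sqr_ge0 ?sumr_ge0 // => g _; exact: sqr_ge0.
have r0 : 0 < - om by rewrite oppr_gt0.
have [eps [d [eps0 d0 small]]] := envelope_parameters (size L) c0 r0 Gm0.
pose T := ln eps / om.
have epsE : expR (om * T) = eps by rewrite /T mulrC divfK ?lt_eqF // lnK.
have [f fn0 hf] := exists_almost_orthogonal hip hS hK L T d hinf d0.
exists f => //.
have F0 : 0 < hnorm ip f ^+ 2.
  rewrite exprn_gt0 // lt_def hnorm_ge0 andbT.
  by apply: contra fn0 => /eqP /(hnorm_eq0 hip) ->.
apply: (le_lt_trans (y := (\sum_(g <- L) (hnorm ip f ^+ 2 *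
    (d ^+ 2 / eps + (M * hnorm ip g) ^+ 2 * eps) / - om)%:E)%E)).
  rewrite big_seq [leRHS]big_seq; apply: lee_sum => g gL.
  exact: orbit_energy_bound hip om0 epsE hstab (hf g gL).
rewrite sumEFin lte_fin -mulr_suml -mulr_sumr big_split /=.
rewrite big_const_seq count_predT iter_addr_0.
under eq_bigr => g _ do rewrite exprMn.
by rewrite -mulr_suml -mulr_sumr -/Gm -mulrA mulrC ltr_pM2r.
Qed.

Theorem mainTheorem6 (R : realType) (V : lmodType R[i]) (ip : V -> V -> R[i])
  (A : V -> V) (S : R -> V -> V) (G : set V) :
  is_inf_dim_sep_Hilbert ip ->
  bounded_operator ip A ->
  is_exp_semigroup ip A S ->
  exp_stable ip S ->
  countable G ->
  semi_continuous_frame ip S G `[0%R, +oo[ ->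
  infinite_set G.
Proof.
move=> [hip _ _ hinf] hA hS hstab _ [c [Cc [c0 [_ hframe]]]] finG.
have [f _ small] :=
  finite_orbits_small_energy (finmap.enum_fset (fset_set G)) hip hinf hA hS hstab c0.
have [lower _] := hframe f.
rewrite esum_fset // ?fsbig_finite // in lower; last first.
  by move=> g _; apply: integral_ge0 => t _; rewrite lee_fin sqr_ge0.
by have := le_lt_trans lower small; rewrite ltxx.
Qed.
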